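(* Let $\tau=2\pi P/Q$ and $\beta=\nu/P+Q/2\pmod 1$ ($P,Q,\nu$ integers, $Q\ge1$, $P\ne0$), and let $d$ be the integer part of $(Q+1)/2$. If $\mu>0$ is fixed and the matrix $\mathbf S(\vartheta,\mu)$ has an eigenvalue which is constant for $\vartheta$ in a subset of positive Lebesgue measure of $(0,2\pi/Q)$, then the $d\times d$ matrix $\mathbf G^{(d)}:=\{G_{jk}\}_{1\le j,k\le d}$ is singular.
   Context: Write $P/Q=p/q$ with $p,q$ coprime. $\mathbf S(\vartheta,\mu)$ is the $Q\times Q$ matrix with entries $S_{jk}(\vartheta)=e^{-i\mu\cos(\vartheta+2\pi(j-1)/Q)}G_{jk}$, where $G_{jk}=\frac1Q\sum_{s=0}^{Q-1}e^{2\pi i s(j-k)/Q}a_{s+1}$ and $a_r=e^{-i\pi p(r+\beta-1)^2/q}$, $1\le r\le Q$. *)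

From HB Require Import structures.
From Stdlib Require Import Reals ZArith Lra Psatz.
From Stdlib Require Import Classical ClassicalEpsilon FunctionalExtensionality.
From mathcomp Require Import all_boot all_order all_algebra.

Set Implicit Arguments.
Unset Strict Implicit.
Unset Printing Implicit Defensive.

Local Open Scope R_scope.

Record Cpx := MkC { cre : R; cim : R }.

Definition Cpx_dec (x y : Cpx) : {x = y} + {x <> y}.
Proof.
case: x => a b; case: y => c d.
case: (Req_EM_T a c) => Hac; last by right => -[].
case: (Req_EM_T b d) => Hbd; last by right => -[].
by left; rewrite Hac Hbd.
Defined.

Definition Cpx_eqb (x y : Cpx) : bool := if Cpx_dec x y then true else false.

Lemma Cpx_eqP : Equality.axiom Cpx_eqb.
Proof. by move=> x y; rewrite /Cpx_eqb; case: Cpx_dec => H; constructor. Qed.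

HB.instance Definition _ := hasDecEq.Build Cpx Cpx_eqP.

Definition Cpx_find (P : pred Cpx) (n : nat) : option Cpx :=
  match excluded_middle_informative (exists x, P x) with
  | left H => Some (proj1_sig (constructive_indefinite_description _ H))
  | right _ => None
  end.

Lemma Cpx_find_correct P n x : Cpx_find P n = Some x -> P x.
Proof.
rewrite /Cpx_find; case: excluded_middle_informative => // H [<-].
exact: proj2_sig (constructive_indefinite_description _ H).
Qed.

Lemma Cpx_find_complete (P : pred Cpx) :
  (exists x, P x) -> exists n, Cpx_find P n.
Proof.
move=> H; exists 0%N; rewrite /Cpx_find.
by case: excluded_middle_informative.
Qed.

Lemma Cpx_find_ext (P Q : pred Cpx) : P =1 Q -> Cpx_find P =1 Cpx_find Q.
Proof.
move=> PQ; have -> : P = Q by apply: functional_extensionality.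
by [].
Qed.

HB.instance Definition _ :=
  hasChoice.Build Cpx Cpx_find_correct Cpx_find_complete Cpx_find_ext.

Definition Cadd (x y : Cpx) := MkC (cre x + cre y) (cim x + cim y).
Definition Copp (x : Cpx) := MkC (- cre x) (- cim x).
Definition Czero := MkC 0 0.
Definition Cone := MkC 1 0.
Definition Cmul (x y : Cpx) :=
  MkC (cre x * cre y - cim x * cim y) (cre x * cim y + cim x * cre y).
Definition Cinv (x : Cpx) :=
  let n := (cre x * cre x + cim x * cim x) in
  MkC (cre x / n) (- cim x / n).

Lemma CaddA : associative Cadd.
Proof. by move=> [a b] [c d] [e f]; rewrite /Cadd /Copp /Czero /=; f_equal; ring. Qed.
Lemma CaddC : commutative Cadd.
Proof. by move=> [a b] [c d]; rewrite /Cadd /Copp /Czero /=; f_equal; ring. Qed.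
Lemma Cadd0 : left_id Czero Cadd.
Proof. by move=> [a b]; rewrite /Cadd /Copp /Czero /=; f_equal; ring. Qed.
Lemma CaddN : left_inverse Czero Copp Cadd.
Proof. by move=> [a b]; rewrite /Cadd /Copp /Czero /=; f_equal; ring. Qed.

HB.instance Definition _ := GRing.isZmodule.Build Cpx CaddA CaddC Cadd0 CaddN.

Lemma CmulA : associative Cmul.
Proof. by move=> [a b] [c d] [e f]; rewrite /Cmul /Cone /=; f_equal; ring. Qed.
Lemma CmulC : commutative Cmul.
Proof. by move=> [a b] [c d]; rewrite /Cmul /Cone /=; f_equal; ring. Qed.
Lemma Cmul1 : left_id Cone Cmul.
Proof. by move=> [a b]; rewrite /Cmul /Cone /=; f_equal; ring. Qed.
Lemma CmulDl : left_distributive Cmul Cadd.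
Proof. by move=> [a b] [c d] [e f]; rewrite /Cmul /Cadd /=; f_equal; ring. Qed.
Lemma Cone_neq0 : Cone != Czero.
Proof. by apply/eqP => -[]; apply: R1_neq_R0. Qed.

HB.instance Definition _ :=
  GRing.Zmodule_isComNzRing.Build Cpx CmulA CmulC Cmul1 CmulDl Cone_neq0.

Lemma CmulV (x : Cpx) : x != 0%R -> Cmul (Cinv x) x = Cone.
Proof.
case: x => a b Hx.
have Hn : (a * a + b * b) <> 0.
  move=> H0; move/eqP: Hx; apply.
  have Ha : a = 0 by nra.
  have Hb : b = 0 by nra.
  by rewrite Ha Hb.
by rewrite /Cmul /Cinv /Cone /=; f_equal; field.
Qed.

Lemma Cinv0 : Cinv 0%R = 0%R.
Proof.
rewrite /Cinv /= /GRing.zero /=.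
rewrite /Czero /=; f_equal; rewrite /Rdiv; ring_simplify; rewrite ?Rmult_0_l //.
Qed.

HB.instance Definition _ := GRing.ComNzRing_isField.Build Cpx CmulV Cinv0.

Definition cexpi (t : R) : Cpx := MkC (cos t) (sin t).

Definition frac1 (x : R) : R := (x - IZR (Int_part x)).

Definition beta (P nu : Z) (Q : nat) : R :=
  frac1 (IZR nu / IZR P + INR Q / 2).

(* a_r = exp(-i pi p (r + beta - 1)^2 / q); here a_idx s = a_{s+1}, s = 0..Q-1 *)
Definition a_idx (p : Z) (q : nat) (b : R) (s : nat) : Cpx :=
  cexpi (- (PI * IZR p * (INR s + b) ^ 2 / INR q)).

(* G_{j+1,k+1} (0-based indices j,k) =
   (1/Q) sum_{s=0}^{Q-1} exp(2 pi i s (j-k)/Q) a_{s+1} *)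
Definition Gent (Q : nat) (p : Z) (q : nat) (b : R) (j k : nat) : Cpx :=
  ((Q%:R : Cpx)^-1 *
   \sum_(s < Q) cexpi (2 * PI * INR s * (INR j - INR k) / INR Q)
                * a_idx p q b s)%R.

Definition Gmx (Q : nat) (p : Z) (q : nat) (b : R) : 'M[Cpx]_Q :=
  \matrix_(j < Q, k < Q) Gent Q p q b j k.

Definition Gd (d Q : nat) (p : Z) (q : nat) (b : R) : 'M[Cpx]_d :=
  \matrix_(j < d, k < d) Gent Q p q b j k.

Definition Smx (Q : nat) (p : Z) (q : nat) (b : R) (theta mu : R) : 'M[Cpx]_Q :=
  \matrix_(j < Q, k < Q)
     (cexpi (- (mu * cos (theta + 2 * PI * INR j / INR Q)))
      * Gent Q p q b j k)%R.

Definition lebesgue_null (E : R -> Prop) : Prop :=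
  forall eps : R, (0 < eps) ->
    exists a b : nat -> R,
      (forall n, a n <= b n) /\
      (forall x, E x -> exists n, (a n < x < b n)) /\
      (forall N, (sum_f_R0 (fun n => b n - a n) N <= eps)).

(* E has positive (outer) Lebesgue measure. *)
Definition positive_measure (E : R -> Prop) : Prop := ~ lebesgue_null E.

(* Replace theta by a complex variable w and put
     M(w)_jk = exp(u_j(w)) G_jk - lam delta_jk,
     u_j(w) = -(i mu / 2) (e^{i (w + 2 pi j / Q)} + e^{-i (w + 2 pi j / Q)}),
   so that M(theta) = S(theta, mu) - lam on the real axis and
   Phi(w) = det M(w) vanishes on E.
   1. Phi is an exponential polynomial: a finite sum of terms
      c exp(i k w + g e^{iw} + d e^{-iw}).  This class is closed under sums,
      products and differentiation, with explicit growth bounds for iterated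
      derivatives; with Taylor's bound they give an identity theorem: if all
      derivatives vanish at one point, the function vanishes identically.
   2. A set of positive measure is infinite, so E has a cluster point
      t0; by Rolle's theorem all derivatives of Phi vanish at t0.  Hence
      Phi = 0 everywhere.
   3. Along w_m = pi/(2Q) - i m, Re u_j(w_m) tends to +oo for j < d and to -oo
      for j >= d.  Dividing the first d rows of M(w_m) by exp(u_j), the
      matrices converge to a block-triangular matrix of determinant
      (-lam)^(Q-d) det G^(d), which is therefore 0.
   4. Finally lam <> 0: for lam = 0, Phi(0) = det(diag(exp u_j(0)) G) <> 0
      because G is conjugate by the discrete Fourier transform to the
      invertible diagonal matrix diag(a_r). *)

From HB Require Import structures.
From Stdlib Require Import Reals ZArith Lra Lia Psatz.
From Stdlib Require Import Classical ClassicalEpsilon.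
From Stdlib Require List.
From mathcomp Require Import all_boot all_order all_algebra perm.

Set Implicit Arguments.
Unset Strict Implicit.
Unset Printing Implicit Defensive.

Import GRing.Theory.
Local Open Scope R_scope.

Lemma creD (x y : Cpx) : cre (x + y)%R = cre x + cre y. Proof. by []. Qed.
Lemma cimD (x y : Cpx) : cim (x + y)%R = cim x + cim y. Proof. by []. Qed.
Lemma creM (x y : Cpx) : cre (x * y)%R = cre x * cre y - cim x * cim y. Proof. by []. Qed.
Lemma cimM (x y : Cpx) : cim (x * y)%R = cre x * cim y + cim x * cre y. Proof. by []. Qed.
Lemma creN (x : Cpx) : cre (- x)%R = - cre x. Proof. by []. Qed.
Lemma cimN (x : Cpx) : cim (- x)%R = - cim x. Proof. by []. Qed.
Lemma cre0 : cre 0%R = 0. Proof. by []. Qed.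
Lemma cim0 : cim 0%R = 0. Proof. by []. Qed.
Lemma cre1 : cre 1%R = 1. Proof. by []. Qed.
Lemma cim1 : cim 1%R = 0. Proof. by []. Qed.

Lemma Cext (x y : Cpx) : cre x = cre y -> cim x = cim y -> x = y.
Proof. by case: x; case: y => /= ? ? ? ? -> ->. Qed.

Definition RC (r : R) : Cpx := MkC r 0.
Definition Ci : Cpx := MkC 0 1.
Lemma creRC r : cre (RC r) = r. Proof. by []. Qed.
Lemma cimRC r : cim (RC r) = 0. Proof. by []. Qed.
Lemma creCi : cre Ci = 0. Proof. by []. Qed.
Lemma cimCi : cim Ci = 1. Proof. by []. Qed.

Ltac cring := apply: Cext;
  rewrite ?(creM, cimM, creD, cimD, creN, cimN, cre0, cim0, cre1, cim1,
            creRC, cimRC, creCi, cimCi);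
  ring.

Definition Cexp (z : Cpx) : Cpx :=
  MkC (exp (cre z) * cos (cim z)) (exp (cre z) * sin (cim z)).
Lemma creCexp z : cre (Cexp z) = exp (cre z) * cos (cim z). Proof. by []. Qed.
Lemma cimCexp z : cim (Cexp z) = exp (cre z) * sin (cim z). Proof. by []. Qed.

Lemma Cexp_add x y : Cexp (x + y)%R = (Cexp x * Cexp y)%R.
Proof.
apply: Cext; rewrite ?creM ?cimM !creCexp !cimCexp creD cimD exp_plus
  ?cos_plus ?sin_plus; ring.
Qed.

Lemma Cexp0 : Cexp 0%R = 1%R.
Proof. by apply: Cext; rewrite ?creCexp ?cimCexp exp_0 ?cos_0 ?sin_0 /=; ring. Qed.

Lemma CexpNK z : (Cexp (- z) * Cexp z = 1)%R.
Proof. by rewrite -Cexp_add addNr Cexp0. Qed.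

Lemma Cexp_neq0 z : Cexp z <> 0%R.
Proof.
move=> H; have := CexpNK z; rewrite H mulr0 => /(f_equal cre).
rewrite cre0 cre1; lra.
Qed.

Lemma Cexp_imag x : Cexp (MkC 0 x) = cexpi x.
Proof. by apply: Cext; rewrite /= exp_0; ring. Qed.

Lemma INR_gt0 n : (0 < n)%N -> 0 < INR n.
Proof. by move=> hn; apply: lt_0_INR; apply/ltP. Qed.

Lemma exp_le_mono x y : x <= y -> exp x <= exp y.
Proof. by case=> [h|->]; [exact: Rlt_le (exp_increasing _ _ h)|lra]. Qed.

(* Any norm would do; this one is submultiplicative and easy to compute with. *)
Definition norm1 (z : Cpx) : R := Rabs (cre z) + Rabs (cim z).

Lemma norm1_ge0 z : 0 <= norm1 z.
Proof. by rewrite /norm1; have := Rabs_pos (cre z); have := Rabs_pos (cim z); lra. Qed.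

Lemma norm1_add x y : norm1 (x + y)%R <= norm1 x + norm1 y.
Proof.
rewrite /norm1 creD cimD; have := Rabs_triang (cre x) (cre y).
have := Rabs_triang (cim x) (cim y); lra.
Qed.

Lemma norm1_opp x : norm1 (- x)%R = norm1 x.
Proof. by rewrite /norm1 creN cimN !Rabs_Ropp. Qed.

Lemma norm1_mul x y : norm1 (x * y)%R <= norm1 x * norm1 y.
Proof.
rewrite /norm1 creM cimM.
have h1 := Rabs_triang (cre x * cre y) (- (cim x * cim y)).
have h2 := Rabs_triang (cre x * cim y) (cim x * cre y).
rewrite !Rabs_Ropp !Rabs_mult in h1 h2.
rewrite /Rminus; nra.
Qed.

Lemma norm1_pow x n : norm1 (x ^+ n)%R <= norm1 x ^ n.
Proof.
elim: n => [|n IH]; first by rewrite expr0 /norm1 /= Rabs_R0 Rabs_R1; lra.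
rewrite exprS /=; apply: Rle_trans (norm1_mul _ _) _.
by apply: Rmult_le_compat_l; [exact: norm1_ge0|exact: IH].
Qed.

Lemma norm1_scale r z : norm1 (RC r * z)%R = Rabs r * norm1 z.
Proof. rewrite /norm1 creM cimM /= !Rmult_0_l Rminus_0_r Rplus_0_r !Rabs_mult; ring. Qed.

Lemma norm1_RC r : norm1 (RC r) = Rabs r.
Proof. by rewrite /norm1 /= Rabs_R0 Rplus_0_r. Qed.

Lemma norm1_Ci_mul z : norm1 (Ci * z)%R = norm1 z.
Proof.
rewrite /norm1 creM cimM /=.
have -> : 0 * cre z - 1 * cim z = - cim z by ring.
have -> : 0 * cim z + 1 * cre z = cre z by ring.
by rewrite Rabs_Ropp Rplus_comm.
Qed.

Lemma Rabs_cre_norm1 z : Rabs (cre z) <= norm1 z.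
Proof. by rewrite /norm1; have := Rabs_pos (cim z); lra. Qed.

Lemma Rabs_cim_norm1 z : Rabs (cim z) <= norm1 z.
Proof. by rewrite /norm1; have := Rabs_pos (cre z); lra. Qed.

Lemma cre_le_norm1 z : cre z <= norm1 z.
Proof. by have := Rabs_cre_norm1 z; have := Rle_abs (cre z); lra. Qed.

Lemma norm1_Cexp z : norm1 (Cexp z) <= 2 * exp (cre z).
Proof.
rewrite /norm1 creCexp cimCexp !Rabs_mult (Rabs_pos_eq (exp _));
  last exact: Rlt_le (exp_pos _).
have := exp_pos (cre z).
have : Rabs (cos (cim z)) <= 1 by apply: Rabs_le; have := COS_bound (cim z); lra.
have : Rabs (sin (cim z)) <= 1 by apply: Rabs_le; have := SIN_bound (cim z); lra.
nra.
Qed.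

Lemma norm1_eq0 z : norm1 z = 0 -> z = 0%R.
Proof.
rewrite /norm1 => H; have := Rabs_pos (cre z); have := Rabs_pos (cim z) => h1 h2.
have Rabs0 x : Rabs x = 0 -> x = 0 by case: (Req_dec x 0) => // /Rabs_no_R0.
by apply: Cext; apply: Rabs0; lra.
Qed.

Lemma derivable_pt_lim_congr f g x l l' :
  derivable_pt_lim f x l -> (forall y, f y = g y) -> l = l' ->
  derivable_pt_lim g x l'.
Proof.
move=> H E <- e he; have [d Hd] := H e he; exists d => h h0 hd.
by rewrite -!E; exact: Hd.
Qed.

Definition Cderiv (f : R -> Cpx) (s : R) (l : Cpx) :=
  derivable_pt_lim (fun x => cre (f x)) s (cre l) /\
  derivable_pt_lim (fun x => cim (f x)) s (cim l).

Lemma Cderiv_ext f g s l l' :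
  Cderiv f s l -> (forall y, f y = g y) -> l = l' -> Cderiv g s l'.
Proof.
move=> [H1 H2] E <-.
by split; [apply: (derivable_pt_lim_congr H1)|apply: (derivable_pt_lim_congr H2)]
  => // y; rewrite E.
Qed.

Lemma Cderiv_const c s : Cderiv (fun _ => c) s 0%R.
Proof.
by split; [apply: (derivable_pt_lim_congr (derivable_pt_lim_const (cre c) s))|
  apply: (derivable_pt_lim_congr (derivable_pt_lim_const (cim c) s))].
Qed.

Lemma Cderiv_add f g s l1 l2 : Cderiv f s l1 -> Cderiv g s l2 ->
  Cderiv (fun x => f x + g x)%R s (l1 + l2)%R.
Proof.
move=> [A1 A2] [B1 B2]; split.
- exact: derivable_pt_lim_congr (derivable_pt_lim_plus _ _ _ _ _ A1 B1) _ _.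
- exact: derivable_pt_lim_congr (derivable_pt_lim_plus _ _ _ _ _ A2 B2) _ _.
Qed.

Lemma Cderiv_mul f g s l1 l2 : Cderiv f s l1 -> Cderiv g s l2 ->
  Cderiv (fun x => f x * g x)%R s (l1 * g s + f s * l2)%R.
Proof.
move=> [A1 A2] [B1 B2]; split.
- apply: derivable_pt_lim_congr.
  + exact: derivable_pt_lim_plus (derivable_pt_lim_mult _ _ _ _ _ A1 B1)
      (derivable_pt_lim_opp _ _ _ (derivable_pt_lim_mult _ _ _ _ _ A2 B2)).
  + by move=> y; rewrite /plus_fct /opp_fct /mult_fct creM; ring.
  + by rewrite creD !creM; ring.
- apply: derivable_pt_lim_congr.
  + exact: derivable_pt_lim_plus (derivable_pt_lim_mult _ _ _ _ _ A1 B2)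
      (derivable_pt_lim_mult _ _ _ _ _ A2 B1).
  + by move=> y; rewrite /plus_fct /mult_fct cimM; ring.
  + by rewrite cimD !cimM; ring.
Qed.

Lemma Cderiv_cmul c f s l : Cderiv f s l -> Cderiv (fun x => c * f x)%R s (c * l)%R.
Proof.
move=> H; apply: Cderiv_ext (Cderiv_mul (Cderiv_const c s) H) _ _ => //.
by rewrite mul0r add0r.
Qed.

Lemma Cderiv_line a b s : Cderiv (fun x => a + RC x * b)%R s b.
Proof.
have line (u v : R) : derivable_pt_lim (fun x => u + x * v) s v.
  apply: derivable_pt_lim_congr (derivable_pt_lim_plus _ _ _ _ _
    (derivable_pt_lim_const u s)
    (derivable_pt_lim_scal _ v _ _ (derivable_pt_lim_id s))) _ _.
  + by move=> y; rewrite /plus_fct /fct_cte /mult_real_fct /Ranalysis1.id; ring.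
  + ring.
split.
- by apply: derivable_pt_lim_congr (line (cre a) (cre b)) _ _ => // y;
    rewrite creD creM /=; ring.
- by apply: derivable_pt_lim_congr (line (cim a) (cim b)) _ _ => // y;
    rewrite cimD cimM /=; ring.
Qed.

Lemma Cderiv_Cexp f s l :
  Cderiv f s l -> Cderiv (fun x => Cexp (f x)) s (l * Cexp (f s))%R.
Proof.
move=> [A1 A2].
have E1 := derivable_pt_lim_comp _ _ _ _ _ A1 (derivable_pt_lim_exp (cre (f s))).
have C1 := derivable_pt_lim_comp _ _ _ _ _ A2 (derivable_pt_lim_cos (cim (f s))).
have S1 := derivable_pt_lim_comp _ _ _ _ _ A2 (derivable_pt_lim_sin (cim (f s))).
split.
- apply: derivable_pt_lim_congr (derivable_pt_lim_mult _ _ _ _ _ E1 C1) _ _.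
  + by move=> y; rewrite /mult_fct /Ranalysis1.comp creCexp.
  + by rewrite /Ranalysis1.comp creM creCexp cimCexp; ring.
- apply: derivable_pt_lim_congr (derivable_pt_lim_mult _ _ _ _ _ E1 S1) _ _.
  + by move=> y; rewrite /mult_fct /Ranalysis1.comp cimCexp.
  + by rewrite /Ranalysis1.comp cimM creCexp cimCexp; ring.
Qed.

Lemma Cderiv_sum (I : Type) (r : seq I) (F : I -> R -> Cpx) (L : I -> Cpx) s :
  (forall i, Cderiv (F i) s (L i)) ->
  Cderiv (fun x => \sum_(i <- r) F i x)%R s (\sum_(i <- r) L i)%R.
Proof.
move=> H; elim: r => [|i r IH].
  by apply: Cderiv_ext (Cderiv_const 0%R s) _ _ => *; rewrite big_nil.
by apply: Cderiv_ext (Cderiv_add (H i) IH) _ _ => *; rewrite big_cons.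
Qed.

(** * Exponential polynomials *)

(* A term [c * exp (i k w + g e^{iw} + d e^{-iw})] with integer frequency [k];
   every entry of the matrices below is a finite sum of such terms. *)
Record epterm := EPTerm { coef : Cpx; freq : Z; gplus : Cpx; gminus : Cpx }.

Definition phase (t : epterm) (w : Cpx) : Cpx :=
  (Ci * RC (IZR (freq t)) * w + gplus t * Cexp (Ci * w)
   + gminus t * Cexp (- (Ci * w)))%R.
Definition term_val (t : epterm) (w : Cpx) : Cpx := (coef t * Cexp (phase t w))%R.
Definition ep_eval (l : seq epterm) (w : Cpx) : Cpx := (\sum_(t <- l) term_val t w)%R.

(* Formal derivative: the derivative of the phase is [i k + i g e^{iw} - i d e^{-iw}],
   so a term differentiates into three terms of the same shape. *)
Definition term_deriv (t : epterm) : seq epterm :=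
  [:: EPTerm (Ci * RC (IZR (freq t)) * coef t)%R (freq t) (gplus t) (gminus t);
      EPTerm (Ci * gplus t * coef t)%R (freq t + 1) (gplus t) (gminus t);
      EPTerm (- (Ci * gminus t) * coef t)%R (freq t - 1) (gplus t) (gminus t)].
Definition ep_deriv (l : seq epterm) : seq epterm := flatten (map term_deriv l).
Definition ep_derivn (n : nat) (l : seq epterm) : seq epterm := iter n ep_deriv l.

Lemma ep_eval_cat l1 l2 w : ep_eval (l1 ++ l2) w = (ep_eval l1 w + ep_eval l2 w)%R.
Proof. by rewrite /ep_eval big_cat. Qed.

Lemma ep_eval_nil w : ep_eval [::] w = 0%R.
Proof. by rewrite /ep_eval big_nil. Qed.

Lemma ep_eval_cons t l w : ep_eval (t :: l) w = (term_val t w + ep_eval l w)%R.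
Proof. by rewrite /ep_eval big_cons. Qed.

Lemma ep_eval_deriv l w :
  ep_eval (ep_deriv l) w = (\sum_(t <- l) ep_eval (term_deriv t) w)%R.
Proof.
elim: l => [|t l IH]; first by rewrite /ep_deriv /= ep_eval_nil big_nil.
by rewrite [ep_deriv _]/= ep_eval_cat IH big_cons.
Qed.

Lemma ep_derivn_add m n l : ep_derivn m (ep_derivn n l) = ep_derivn (m + n) l.
Proof. by rewrite /ep_derivn iterD. Qed.

Lemma term_val_line_deriv t p v s :
  Cderiv (fun x => term_val t (p + RC x * v)%R) s
         (v * ep_eval (term_deriv t) (p + RC s * v))%R.
Proof.
set w := (p + RC s * v)%R.
have H1 : Cderiv (fun x => Ci * RC (IZR (freq t)) * (p + RC x * v))%R s
            (Ci * RC (IZR (freq t)) * v)%R.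
  exact: Cderiv_cmul (Cderiv_line p v s).
have H2 : Cderiv (fun x => gplus t * Cexp (Ci * (p + RC x * v)))%R s
            (gplus t * ((Ci * v) * Cexp (Ci * w)))%R.
  apply: Cderiv_cmul.
  apply: Cderiv_ext (Cderiv_Cexp (Cderiv_line (Ci * p)%R (Ci * v)%R s)) _ _.
  + by move=> y; congr Cexp; cring.
  + by congr (_ * Cexp _)%R; rewrite /w; cring.
have H3 : Cderiv (fun x => gminus t * Cexp (- (Ci * (p + RC x * v))))%R s
            (gminus t * (- (Ci * v) * Cexp (- (Ci * w))))%R.
  apply: Cderiv_cmul.
  apply: Cderiv_ext (Cderiv_Cexp (Cderiv_line (- (Ci * p))%R (- (Ci * v))%R s)) _ _.
  + by move=> y; congr Cexp; cring.
  + by congr (_ * Cexp _)%R; rewrite /w; cring.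
apply: Cderiv_ext
  (Cderiv_cmul (coef t) (Cderiv_Cexp (Cderiv_add (Cderiv_add H1 H2) H3))) _ _ => //.
have phase_up : phase (EPTerm (Ci * gplus t * coef t)%R (freq t + 1) (gplus t) (gminus t)) w
    = (phase t w + Ci * w)%R.
  by rewrite /phase /= plus_IZR; cring.
have phase_down : phase (EPTerm (- (Ci * gminus t) * coef t)%R (freq t - 1)
                                (gplus t) (gminus t)) w
    = (phase t w + - (Ci * w))%R.
  by rewrite /phase /= minus_IZR; cring.
have phase_same : phase (EPTerm (Ci * RC (IZR (freq t)) * coef t)%R (freq t)
                                 (gplus t) (gminus t)) w = phase t w by [].
rewrite /ep_eval !big_cons big_nil /term_val phase_same phase_up phase_down.
rewrite !(Cexp_add (phase t w)) -/w.
change (Cexp (Ci * RC (IZR (freq t)) * w + gplus t * Cexp (Ci * w)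
              + gminus t * Cexp (- (Ci * w))))%R with (Cexp (phase t w)).
move: (Cexp (phase t w)) (Cexp (Ci * w)%R) (Cexp (- (Ci * w))%R) => A B C /=.
cring.
Qed.

Lemma ep_eval_line_deriv l p v s :
  Cderiv (fun x => ep_eval l (p + RC x * v)%R) s
         (v * ep_eval (ep_deriv l) (p + RC s * v))%R.
Proof.
apply: Cderiv_ext (Cderiv_sum l (fun t => term_val_line_deriv t p v s)) _ _ => //.
by rewrite ep_eval_deriv mulr_sumr.
Qed.

Definition term_mul (t1 t2 : epterm) : epterm :=
  EPTerm (coef t1 * coef t2)%R (freq t1 + freq t2)
         (gplus t1 + gplus t2)%R (gminus t1 + gminus t2)%R.

Lemma term_val_mul t1 t2 w : term_val (term_mul t1 t2) w = (term_val t1 w * term_val t2 w)%R.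
Proof.
rewrite /term_val.
have -> : phase (term_mul t1 t2) w = (phase t1 w + phase t2 w)%R.
  by rewrite /phase /= plus_IZR; cring.
rewrite Cexp_add; move: (Cexp _) (Cexp _) => A B; cring.
Qed.

Definition ep_mul (l1 l2 : seq epterm) : seq epterm :=
  flatten (map (fun t1 => map (term_mul t1) l2) l1).

Lemma ep_eval_mul l1 l2 w : ep_eval (ep_mul l1 l2) w = (ep_eval l1 w * ep_eval l2 w)%R.
Proof.
elim: l1 => [|t l IH]; first by rewrite /ep_mul /= !ep_eval_nil mul0r.
rewrite [ep_mul _ _]/= ep_eval_cat -/(ep_mul l l2) IH ep_eval_cons mulrDl.
congr (_ + _)%R; rewrite /ep_eval big_map mulr_sumr.
by apply: eq_bigr => t2 _; exact: term_val_mul.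
Qed.

Definition is_exp_poly (f : Cpx -> Cpx) := exists l, forall w, f w = ep_eval l w.

Lemma is_exp_poly_ext f g : is_exp_poly f -> (forall w, f w = g w) -> is_exp_poly g.
Proof. by move=> [l hl] E; exists l => w; rewrite -E hl. Qed.

Lemma is_exp_poly_const c : is_exp_poly (fun _ => c).
Proof.
exists [:: EPTerm c 0 0%R 0%R] => w.
rewrite ep_eval_cons ep_eval_nil addr0 /term_val /phase /=.
have -> : (Ci * RC 0 * w + 0 * Cexp (Ci * w) + 0 * Cexp (- (Ci * w)))%R = 0%R by cring.
by rewrite Cexp0 mulr1.
Qed.

Lemma is_exp_poly_add f g :
  is_exp_poly f -> is_exp_poly g -> is_exp_poly (fun w => f w + g w)%R.
Proof. by move=> [l1 H1] [l2 H2]; exists (l1 ++ l2) => w; rewrite ep_eval_cat H1 H2. Qed.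

Lemma is_exp_poly_mul f g :
  is_exp_poly f -> is_exp_poly g -> is_exp_poly (fun w => f w * g w)%R.
Proof. by move=> [l1 H1] [l2 H2]; exists (ep_mul l1 l2) => w; rewrite ep_eval_mul H1 H2. Qed.

Lemma is_exp_poly_sum (I : Type) (r : seq I) (F : I -> Cpx -> Cpx) :
  (forall i, is_exp_poly (F i)) -> is_exp_poly (fun w => \sum_(i <- r) F i w)%R.
Proof.
move=> H; elim: r => [|i r IH].
  by apply: is_exp_poly_ext (is_exp_poly_const 0%R) _ => w; rewrite big_nil.
by apply: is_exp_poly_ext (is_exp_poly_add (H i) IH) _ => w; rewrite big_cons.
Qed.

Lemma is_exp_poly_prod (I : Type) (r : seq I) (F : I -> Cpx -> Cpx) :
  (forall i, is_exp_poly (F i)) -> is_exp_poly (fun w => \prod_(i <- r) F i w)%R.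
Proof.
move=> H; elim: r => [|i r IH].
  by apply: is_exp_poly_ext (is_exp_poly_const 1%R) _ => w; rewrite big_nil.
by apply: is_exp_poly_ext (is_exp_poly_mul (H i) IH) _ => w; rewrite big_cons.
Qed.

Lemma is_exp_poly_exp (g d : Cpx) :
  is_exp_poly (fun w => Cexp (g * Cexp (Ci * w) + d * Cexp (- (Ci * w))))%R.
Proof.
exists [:: EPTerm 1%R 0 g d] => w.
rewrite ep_eval_cons ep_eval_nil addr0 /term_val /phase /= mul1r.
by congr Cexp; cring.
Qed.

Definition term_bounded (K A : R) (t : epterm) : Prop :=
  Rabs (IZR (freq t)) <= K /\ norm1 (gplus t) + norm1 (gminus t) <= A.
Definition ep_bounded (K A : R) (l : seq epterm) : Prop := List.Forall (term_bounded K A) l.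

(* The weight of [l] on the strip [|Im w| <= Y]: sum of [|c| e^{|k| Y}]. *)
Fixpoint ep_weight (Y : R) (l : seq epterm) : R :=
  match l with
  | [::] => 0
  | t :: l => norm1 (coef t) * exp (Rabs (IZR (freq t)) * Y) + ep_weight Y l
  end.

Lemma ep_weight_ge0 Y l : 0 <= ep_weight Y l.
Proof.
elim: l => [|t l IH] /=; first lra.
have := norm1_ge0 (coef t); have := exp_pos (Rabs (IZR (freq t)) * Y); nra.
Qed.

Lemma ep_weight_cat Y l1 l2 : ep_weight Y (l1 ++ l2) = ep_weight Y l1 + ep_weight Y l2.
Proof. by elim: l1 => [|t l IH] /=; [lra|rewrite IH; lra]. Qed.

Lemma ep_bounded_mono K A K' A' l :
  K <= K' -> A <= A' -> ep_bounded K A l -> ep_bounded K' A' l.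
Proof. by move=> hK hA; apply: List.Forall_impl => t [h1 h2]; split; lra. Qed.

Lemma ep_bounded_exists l : exists K A, 0 <= K /\ 0 <= A /\ ep_bounded K A l.
Proof.
elim: l => [|t l [K [A [hK [hA IH]]]]].
  by exists 0, 0; split; [lra|split; [lra|constructor]].
exists (Rabs (IZR (freq t)) + K), (norm1 (gplus t) + norm1 (gminus t) + A).
have := Rabs_pos (IZR (freq t)); have := norm1_ge0 (gplus t).
have := norm1_ge0 (gminus t) => *.
split; [lra|split; [lra|constructor]]; first by split; lra.
by apply: ep_bounded_mono IH; lra.
Qed.

Lemma cre_phase_le A Y t w : Rabs (cim w) <= Y ->
  norm1 (gplus t) + norm1 (gminus t) <= A ->
  cre (phase t w) <= Rabs (IZR (freq t)) * Y + 2 * A * exp Y.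
Proof.
move=> hw hA.
have hexp (z : Cpx) : Rabs (cre z) <= Y -> norm1 (Cexp z) <= 2 * exp Y.
  move=> hz; apply: Rle_trans (norm1_Cexp _) _; apply: Rmult_le_compat_l; first lra.
  by apply: exp_le_mono; have := Rle_abs (cre z); lra.
have hcoef (g z : Cpx) : Rabs (cre z) <= Y -> cre (g * Cexp z)%R <= norm1 g * (2 * exp Y).
  move=> hz; apply: Rle_trans (cre_le_norm1 _) _; apply: Rle_trans (norm1_mul _ _) _.
  by apply: Rmult_le_compat_l; [exact: norm1_ge0|exact: hexp].
have b1 : cre (Ci * RC (IZR (freq t)) * w)%R <= Rabs (IZR (freq t)) * Y.
  have -> : cre (Ci * RC (IZR (freq t)) * w)%R = - IZR (freq t) * cim w.
    by rewrite !creM /=; ring.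
  have := Rle_abs (- IZR (freq t) * cim w); rewrite Rabs_mult Rabs_Ropp.
  have := Rabs_pos (IZR (freq t)); nra.
have reCi : cre (Ci * w)%R = - cim w by rewrite creM /=; ring.
have b2 := hcoef (gplus t) (Ci * w)%R ltac:(by rewrite reCi Rabs_Ropp).
have b3 := hcoef (gminus t) (- (Ci * w))%R ltac:(by rewrite creN reCi Ropp_involutive).
have := exp_pos Y; have := norm1_ge0 (gplus t); have := norm1_ge0 (gminus t).
rewrite /phase !creD; nra.
Qed.

Lemma ep_eval_bound K A Y l w : Rabs (cim w) <= Y -> ep_bounded K A l ->
  norm1 (ep_eval l w) <= ep_weight Y l * (2 * exp (2 * A * exp Y)).
Proof.
move=> hw; elim=> {l} [|t l [_ htA] _ IH] /=.
  by rewrite ep_eval_nil /norm1 /= Rabs_R0; lra.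
rewrite ep_eval_cons; apply: Rle_trans (norm1_add _ _) _.
suff : norm1 (term_val t w)
       <= norm1 (coef t) * exp (Rabs (IZR (freq t)) * Y) * (2 * exp (2 * A * exp Y)).
  by lra.
apply: Rle_trans (norm1_mul _ _) _.
have := norm1_Cexp (phase t w); have := exp_le_mono (cre_phase_le hw htA).
rewrite exp_plus; have := norm1_ge0 (coef t); nra.
Qed.

Lemma ep_weight_term_deriv K A Y t : 0 <= Y -> term_bounded K A t ->
  ep_weight Y (term_deriv t)
  <= (K + A * exp Y) * (norm1 (coef t) * exp (Rabs (IZR (freq t)) * Y)).
Proof.
move=> hY [hK hA]; rewrite /term_deriv /= ?plus_IZR ?minus_IZR /=.
set k := IZR (freq t) in hK *; set C := norm1 (coef t); set E := exp (Rabs k * Y).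
have hC : 0 <= C by exact: norm1_ge0.
have hE : 0 < E by exact: exp_pos.
have shift (j : R) : Rabs j = 1 -> exp (Rabs (k + j) * Y) <= E * exp Y.
  move=> hj; rewrite /E -exp_plus; apply: exp_le_mono.
  by have := Rabs_triang k j; nra.
have coef_bound (a : Cpx) : norm1 (Ci * a * coef t)%R <= norm1 a * C.
  by apply: Rle_trans (norm1_mul _ _) _; rewrite norm1_Ci_mul -/C; lra.
have t1 : norm1 (Ci * RC k * coef t)%R * E <= K * (C * E).
  rewrite -Rmult_assoc; apply: Rmult_le_compat_r; first lra.
  apply: Rle_trans (coef_bound _) _; rewrite norm1_RC.
  by apply: Rmult_le_compat_r.
have t2 : norm1 (Ci * gplus t * coef t)%R * exp (Rabs (k + 1) * Y)
          <= norm1 (gplus t) * (C * E * exp Y).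
  rewrite -Rmult_assoc -(Rmult_assoc _ C E) (Rmult_assoc _ E).
  apply: Rmult_le_compat; [exact: norm1_ge0|exact: Rlt_le (exp_pos _)| |].
  + exact: coef_bound.
  + exact: shift 1 Rabs_R1.
have t3 : norm1 (- (Ci * gminus t) * coef t)%R * exp (Rabs (k + -1) * Y)
          <= norm1 (gminus t) * (C * E * exp Y).
  rewrite -Rmult_assoc -(Rmult_assoc _ C E) (Rmult_assoc _ E).
  apply: Rmult_le_compat; [exact: norm1_ge0|exact: Rlt_le (exp_pos _)| |].
  + by apply: Rle_trans (norm1_mul _ _) _; rewrite norm1_opp norm1_Ci_mul -/C; lra.
  + by apply: shift; rewrite Rabs_Ropp Rabs_R1.
have tA : (norm1 (gplus t) + norm1 (gminus t)) * (C * E * exp Y) <= A * (C * E * exp Y).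
  apply: Rmult_le_compat_r => //.
  by apply: Rmult_le_pos; [apply: Rmult_le_pos; lra|exact: Rlt_le (exp_pos _)].
by lra.
Qed.

Lemma ep_weight_deriv K A Y l : 0 <= Y -> ep_bounded K A l ->
  ep_weight Y (ep_deriv l) <= (K + A * exp Y) * ep_weight Y l.
Proof.
move=> hY; elim=> {l} [|t l ht _ IH]; first by rewrite /ep_deriv /=; lra.
have -> : ep_deriv (t :: l) = term_deriv t ++ ep_deriv l by [].
rewrite ep_weight_cat [ep_weight Y (t :: l)]/= Rmult_plus_distr_l.
by have := ep_weight_term_deriv hY ht; lra.
Qed.

Lemma ep_bounded_deriv K A l : ep_bounded K A l -> ep_bounded (K + 1) A (ep_deriv l).
Proof.
elim=> {l} [|t l [hK hA] _ IH]; first by constructor.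
have -> : ep_deriv (t :: l) = term_deriv t ++ ep_deriv l by [].
apply/(List.Forall_app _ (term_deriv t) (ep_deriv l)); split => //.
have shift (c : Cpx) (j : Z) : Rabs (IZR j) <= 1 ->
    term_bounded (K + 1) A (EPTerm c (freq t + j) (gplus t) (gminus t)).
  by move=> hj; split => //=; rewrite plus_IZR; have := Rabs_triang (IZR (freq t)) (IZR j); lra.
constructor; first by split => //=; lra.
constructor; first by apply: shift; rewrite Rabs_R1; lra.
constructor; last by [].
change (Z.sub (freq t) 1) with (Z.add (freq t) (Zneg xH)).
by apply: shift; rewrite Rabs_Ropp Rabs_R1; lra.
Qed.

Fixpoint rising (c : R) (n : nat) : R :=
  match n with O => 1 | S n => rising c n * (c + INR n) end.

Lemma rising_ge0 c n : 0 <= c -> 0 <= rising c n.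
Proof. by move=> hc; elim: n => [|n IH] /=; [lra|have := pos_INR n; nra]. Qed.

Lemma ep_weight_derivn K A Y l n : 0 <= Y -> 0 <= K -> 0 <= A -> ep_bounded K A l ->
  ep_weight Y (ep_derivn n l) <= rising (K + A * exp Y) n * ep_weight Y l
  /\ ep_bounded (K + INR n) A (ep_derivn n l).
Proof.
move=> hY hK hA hb; elim: n => [|n [IH1 IH2]].
  by split; [rewrite /ep_derivn /=; lra|apply: ep_bounded_mono hb => /=; lra].
rewrite [ep_derivn n.+1 l]/=; split; last first.
  by apply: (ep_bounded_mono _ _ (ep_bounded_deriv IH2)); rewrite ?S_INR; lra.
have hKn : 0 <= K + INR n by have := pos_INR n; lra.
apply: Rle_trans (ep_weight_deriv hY IH2) _; rewrite [rising _ n.+1]/=.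
have := pos_INR n; have := exp_pos Y; have := ep_weight_ge0 Y (ep_derivn n l).
move=> h1 h2 h3; have hc : 0 <= K + A * exp Y + INR n by nra.
have := Rmult_le_compat_l _ _ _ hc IH1; nra.
Qed.

(** * A Taylor-type bound for real functions *)

(* [x^j / j!], the extremal function for [j] integrations of a bounded function. *)
Definition taylor_mono (j : nat) (x : R) : R := x ^ j / INR (fact j).

Lemma taylor_mono_deriv j x : derivable_pt_lim (taylor_mono j.+1) x (taylor_mono j x).
Proof.
apply: derivable_pt_lim_congr
  (derivable_pt_lim_scal _ (/ INR (fact j.+1)) _ _ (derivable_pt_lim_pow x j.+1)) _ _.
  by move=> y; rewrite /mult_real_fct /taylor_mono /Rdiv Rmult_comm.
rewrite /taylor_mono fact_simpl mult_INR; change (Nat.pred j.+1) with j.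
have := INR_fact_lt_0 j; have : 0 < INR j.+1 by apply: INR_gt0.
by move=> h1 h2; field; lra.
Qed.

Lemma taylor_mono0 j : taylor_mono j.+1 0 = 0.
Proof. by rewrite /taylor_mono /= Rmult_0_l /Rdiv Rmult_0_l. Qed.

(* Integrating a bound once: if [g 0 = 0] and [|g'| <= M s^j/j!] on [0,1],
   then [|g| <= M s^{j+1}/(j+1)!] there (mean value theorem for [M F -+ g]). *)
Lemma integrate_bound (g g' : R -> R) M j :
  (forall s, 0 <= s <= 1 -> derivable_pt_lim g s (g' s)) -> g 0 = 0 ->
  (forall s, 0 <= s <= 1 -> Rabs (g' s) <= M * taylor_mono j s) ->
  forall s, 0 <= s <= 1 -> Rabs (g s) <= M * taylor_mono j.+1 s.
Proof.
move=> hd h0 hb s hs.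
case: (Req_dec s 0) => [->|hs0]; first by rewrite h0 taylor_mono0 Rabs_R0; lra.
have hsp : 0 < s by lra.
have in01 c : 0 <= c <= s -> 0 <= c <= 1 by lra.
have mvt (sg : R) : exists c, 0 < c < s /\
    M * taylor_mono j.+1 s + sg * g s = (M * taylor_mono j c + sg * g' c) * s.
  have d c : 0 <= c <= s -> derivable_pt_lim (fun x => M * taylor_mono j.+1 x + sg * g x)
                                             c (M * taylor_mono j c + sg * g' c).
    move=> hc; apply: derivable_pt_lim_plus; apply: derivable_pt_lim_scal.
    - exact: taylor_mono_deriv.
    - exact: hd (in01 c hc).
  have [c [e hc]] := MVT_cor2 _ _ _ _ hsp d.
  by exists c; split => //; move: e; rewrite taylor_mono0 h0; lra.
have [c1 [hc1 e1]] := mvt 1; have [c2 [hc2 e2]] := mvt (-1).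
have between c : 0 <= c <= 1 -> - (M * taylor_mono j c) <= g' c <= M * taylor_mono j c.
  move/hb => h; have := Rle_abs (g' c); have := Rle_abs (- g' c); rewrite Rabs_Ropp; lra.
have b1 := between c1 ltac:(lra); have b2 := between c2 ltac:(lra).
have p1 : 0 <= (M * taylor_mono j c1 + 1 * g' c1) * s by apply: Rmult_le_pos; lra.
have p2 : 0 <= (M * taylor_mono j c2 + -1 * g' c2) * s by apply: Rmult_le_pos; lra.
by apply: Rabs_le; lra.
Qed.

Lemma taylor_bound (h : nat -> R -> R) n M :
  (forall k s, 0 <= s <= 1 -> derivable_pt_lim (h k) s (h k.+1 s)) ->
  (forall k, (k < n)%N -> h k 0 = 0) ->
  (forall s, 0 <= s <= 1 -> Rabs (h n s) <= M) ->
  Rabs (h 0%N 1) <= M / INR (fact n).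
Proof.
move=> hd h0 hb.
suff H j : (j <= n)%N -> forall s, 0 <= s <= 1 ->
    Rabs (h (n - j)%N s) <= M * taylor_mono j s.
  by have := H n (leqnn n) 1; rewrite subnn /taylor_mono pow1 /Rdiv Rmult_1_l; apply; lra.
elim: j => [|j IH] hj s hs.
  by rewrite subn0 /taylor_mono /= /Rdiv Rmult_1_l Rinv_1 !Rmult_1_r; apply: hb.
apply: (integrate_bound (g' := h (n - j)%N)) => //.
- by move=> x hx; have := hd (n - j.+1)%N x hx; rewrite subnSK.
- by apply: h0; rewrite ltn_subrL; apply/andP; split => //; apply: leq_trans hj.
- by move=> x hx; apply: IH => //; apply: ltnW.
Qed.

(* The coefficients [(1/2)^n c (c+1)...(c+n-1) / n!] of the binomial series
   [(1 - 1/2)^{-c}]; they tend to zero. *)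
Definition taylor_coef (c : R) (n : nat) : R := (/ 2) ^ n * rising c n / INR (fact n).

Lemma taylor_coef_ge0 c n : 0 <= c -> 0 <= taylor_coef c n.
Proof.
move=> hc; rewrite /taylor_coef; apply: Rmult_le_pos.
  by apply: Rmult_le_pos; [apply: pow_le; lra|exact: rising_ge0].
exact: Rlt_le (Rinv_0_lt_compat _ (INR_fact_lt_0 n)).
Qed.

Lemma taylor_coefS c n :
  taylor_coef c n.+1 = taylor_coef c n * (/ 2 * (c + INR n) / INR n.+1).
Proof.
rewrite /taylor_coef fact_simpl mult_INR [(/ 2) ^ n.+1]/= [rising c n.+1]/=.
have := INR_fact_lt_0 n; have : 0 < INR n.+1 by apply: INR_gt0.
by move=> h1 h2; field; lra.
Qed.

(* Beyond [n >= 2c] successive ratios are at most 3/4. *)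
Lemma taylor_coef_small c eps : 0 <= c -> 0 < eps -> exists n, taylor_coef c n < eps.
Proof.
move=> hc he; have [N HN] := INR_unbounded (2 * c).
have decay m : taylor_coef c (m + N)%N <= (3/4) ^ m * taylor_coef c N.
  elim: m => [|m IH]; first by rewrite add0n /=; lra.
  rewrite addSn taylor_coefS.
  have hn : 0 < INR (m + N).+1 by apply: INR_gt0.
  have hr : / 2 * (c + INR (m + N)) / INR (m + N).+1 <= 3/4.
    apply: (Rmult_le_reg_r (INR (m + N).+1)) => //.
    rewrite /Rdiv Rmult_assoc Rinv_l; last lra.
    by rewrite S_INR plus_INR; have := pos_INR m; lra.
  have hb := taylor_coef_ge0 (m + N)%N hc.
  apply: Rle_trans (Rmult_le_compat_l _ _ _ hb hr) _; rewrite [(3/4)^m.+1]/=; nra.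
have hb := taylor_coef_ge0 N hc.
have [m Hm] := pow_lt_1_zero (3/4) ltac:(rewrite Rabs_right; lra)
  (eps / (taylor_coef c N + 1)) ltac:(apply: Rdiv_lt_0_compat => //; lra).
exists (m + N)%N; have := Hm m (le_n m).
rewrite Rabs_right; last by apply: Rle_ge; apply: pow_le; lra.
move=> h; have : (3/4) ^ m * (taylor_coef c N + 1) < eps.
  apply: (Rmult_lt_reg_r (/ (taylor_coef c N + 1))); first by apply: Rinv_0_lt_compat; lra.
  by rewrite Rmult_assoc Rinv_r; lra.
by have := decay m; have := pow_le (3/4) m; nra.
Qed.

Lemma le_taylor_coef_eq0 x c C : 0 <= c -> 0 <= C ->
  (forall n, Rabs x <= taylor_coef c n * C) -> x = 0.
Proof.
move=> hc hC H; apply: NNPP => /Rabs_no_R0 hx.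
have hx' : 0 < Rabs x by have := Rabs_pos x; lra.
have [n Hn] := @taylor_coef_small c (Rabs x / (C + 1)) hc
   ltac:(apply: Rdiv_lt_0_compat; lra).
have := H n; have := taylor_coef_ge0 n hc => h1 h2.
have : taylor_coef c n * (C + 1) < Rabs x.
  apply: (Rmult_lt_reg_r (/ (C + 1))); first by apply: Rinv_0_lt_compat; lra.
  by move: Hn; rewrite /Rdiv Rmult_assoc Rinv_r; lra.
nra.
Qed.

(** * Identity theorem for exponential polynomials *)

Definition component (b : bool) : Cpx -> R := if b then cre else cim.

Lemma component_norm1 b z : Rabs (component b z) <= norm1 z.
Proof. by case: b; [exact: Rabs_cre_norm1|exact: Rabs_cim_norm1]. Qed.

Lemma component_deriv b f s l :
  Cderiv f s l -> derivable_pt_lim (fun x => component b (f x)) s (component b l).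
Proof. by case: b => -[]. Qed.

Lemma component0 b : component b 0%R = 0. Proof. by case: b. Qed.

Lemma components_eq0 x : (forall b, component b x = 0) -> x = 0%R.
Proof. by move=> H; apply: Cext; [exact: (H true)|exact: (H false)]. Qed.

Lemma line0 p v : (p + RC 0 * v)%R = p.
Proof. by apply: Cext; rewrite ?creD ?cimD ?creM ?cimM ?creRC ?cimRC; ring. Qed.

Lemma line1 p v : (p + RC 1 * v)%R = (p + v)%R.
Proof. by apply: Cext; rewrite ?creD ?cimD ?creM ?cimM ?creRC ?cimRC; ring. Qed.

Lemma ep_derivn_segment_bound K A Y l p v n s :
  0 <= K -> 0 <= A -> ep_bounded K A l -> Rabs (cim p) + Rabs (cim v) <= Y ->
  norm1 v <= / 2 -> 0 <= s <= 1 ->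
  norm1 (v ^+ n * ep_eval (ep_derivn n l) (p + RC s * v))%R
  <= (/ 2) ^ n * (rising (K + A * exp Y) n * (ep_weight Y l * (2 * exp (2 * A * exp Y)))).
Proof.
move=> hK hA hb hpv hv hs.
have hY : 0 <= Y by have := Rabs_pos (cim p); have := Rabs_pos (cim v); lra.
have on_segment : Rabs (cim (p + RC s * v)%R) <= Y.
  rewrite cimD cimM /= Rmult_0_l Rplus_0_r.
  apply: Rle_trans (Rabs_triang _ _) _; rewrite Rabs_mult (Rabs_pos_eq s); last lra.
  by have := Rabs_pos (cim v); nra.
have [hW hbn] := ep_weight_derivn n hY hK hA hb.
have e1 := ep_eval_bound on_segment hbn.
have e2 : norm1 (v ^+ n)%R <= (/ 2) ^ n.
  apply: Rle_trans (norm1_pow _ _) _.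
  by apply: pow_incr; split; [exact: norm1_ge0|exact: hv].
apply: Rle_trans (norm1_mul _ _) _.
apply: Rmult_le_compat; [exact: norm1_ge0|exact: norm1_ge0|exact: e2|].
rewrite -Rmult_assoc; apply: Rle_trans e1 _; apply: Rmult_le_compat_r => //.
by have := exp_pos (2 * A * exp Y); lra.
Qed.

(* If all derivatives of an exponential polynomial vanish at [p], it vanishes
   at every [p + v] with [|v| <= 1/2]: Taylor's bound along the segment. *)
Lemma ep_vanish_step l p v : norm1 v <= / 2 ->
  (forall n, ep_eval (ep_derivn n l) p = 0%R) -> ep_eval l (p + v)%R = 0%R.
Proof.
move=> hv H.
have [K [A [hK [hA hb]]]] := ep_bounded_exists l.
set Y := Rabs (cim p) + Rabs (cim v).
have hY : 0 <= Y by rewrite /Y; have := Rabs_pos (cim p); have := Rabs_pos (cim v); lra.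
set c := K + A * exp Y; set C := ep_weight Y l * (2 * exp (2 * A * exp Y)).
have hc : 0 <= c by rewrite /c; have := exp_pos Y; nra.
have hC : 0 <= C.
  by apply: Rmult_le_pos; [exact: ep_weight_ge0|have := exp_pos (2 * A * exp Y); lra].
apply: components_eq0 => b; rewrite -(line1 p v).
pose h k s := component b (v ^+ k * ep_eval (ep_derivn k l) (p + RC s * v))%R.
have hd k s : 0 <= s <= 1 -> derivable_pt_lim (h k) s (h k.+1 s).
  move=> _; apply: component_deriv.
  apply: Cderiv_ext (Cderiv_cmul (v ^+ k)%R (ep_eval_line_deriv (ep_derivn k l) p v s)) _ _ => //.
  by rewrite mulrA -exprSr.
have h0 k : h k 0 = 0 by rewrite /h line0 H mulr0 component0.
apply: (le_taylor_coef_eq0 hc hC) => n.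
have -> : Rabs (component b (ep_eval l (p + RC 1 * v)%R)) = Rabs (h 0%N 1).
  by rewrite /h expr0 mul1r.
have -> : taylor_coef c n * C = (/ 2) ^ n * (rising c n * C) / INR (fact n).
  by rewrite /taylor_coef /Rdiv; ring.
apply: (taylor_bound hd (fun k _ => h0 k)) => s hs.
apply: Rle_trans (component_norm1 _ _) _.
exact: (ep_derivn_segment_bound n hK hA hb (Rle_refl _) hv hs).
Qed.

Lemma reach_by_small_steps (Z : Cpx -> Prop) p : Z p ->
  (forall w v, norm1 v <= / 2 -> Z w -> Z (w + v)%R) -> forall w, Z w.
Proof.
move=> Zp step.
suff reach N : forall w : Cpx, norm1 (w - p)%R <= INR N / 2 -> Z w.
  by move=> w; have [N HN] := INR_unbounded (2 * norm1 (w - p)%R); apply: (reach N); lra.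
elim: N => [|N IH] w hw.
  have := norm1_ge0 (w - p)%R; change (INR 0) with 0 in hw => h0.
  by have /eqP := @norm1_eq0 (w - p)%R ltac:(lra); rewrite subr_eq0 => /eqP ->.
have hN := pos_INR N; rewrite S_INR in hw.
set r := INR N / (INR N + 1); set w' := (p + RC r * (w - p))%R.
have hr : 0 <= r by apply: Rmult_le_pos => //; apply: Rlt_le; apply: Rinv_0_lt_compat; lra.
have -> : w = (w' + RC (1 - r) * (w - p))%R.
  by rewrite /w'; apply: Cext; rewrite ?(creD, cimD, creN, cimN, creM, cimM) /=; ring.
have -> : 1 - r = / (INR N + 1) by rewrite /r; field; lra.
apply: step.
  rewrite norm1_scale Rabs_pos_eq; last by apply: Rlt_le; apply: Rinv_0_lt_compat; lra.
  apply: (Rmult_le_reg_l (INR N + 1)); first lra.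
  by rewrite -Rmult_assoc Rinv_r; lra.
apply: IH.
have -> : (w' - p)%R = (RC r * (w - p))%R.
  by rewrite /w'; apply: Cext; rewrite ?(creD, cimD, creN, cimN, creM, cimM) /=; ring.
rewrite norm1_scale Rabs_pos_eq // /r.
apply: Rle_trans (Rmult_le_compat_l _ _ _ _ hw) _.
  by apply: Rmult_le_pos => //; apply: Rlt_le; apply: Rinv_0_lt_compat; lra.
by right; field; lra.
Qed.

Lemma ep_identity l p : (forall n, ep_eval (ep_derivn n l) p = 0%R) ->
  forall w, ep_eval l w = 0%R.
Proof.
move=> H w; apply: (reach_by_small_steps (Z := fun w => forall n, ep_eval (ep_derivn n l) w = 0%R)) H _ w 0%N.
move=> w0 v hv Hw m; apply: ep_vanish_step hv _ => n.
by rewrite ep_derivn_add; apply: Hw.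
Qed.

Definition cluster_point (P : R -> Prop) (t0 : R) :=
  forall eps, 0 < eps -> exists x, P x /\ x <> t0 /\ Rabs (x - t0) < eps.

Lemma zero_at_cluster_point f l t0 :
  derivable_pt_lim f t0 l -> cluster_point (fun x => f x = 0) t0 -> f t0 = 0.
Proof.
move=> hd hcl; apply: NNPP => hne.
have he : 0 < Rabs (f t0) by apply: Rabs_pos_lt.
have hc := derivable_continuous_pt f t0 (exist _ l hd).
have [d [hd0 hclose]] := hc (Rabs (f t0)) he.
have [x [hx0 [hxt hxd]]] := hcl d hd0.
have := hclose x (conj (conj I (not_eq_sym hxt)) hxd).
by rewrite /dist /= /R_dist hx0 Rminus_0_l Rabs_Ropp; lra.
Qed.

Lemma rolle_between f f' a b : (forall x, derivable_pt_lim f x (f' x)) ->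
  a < b -> f a = 0 -> f b = 0 -> exists c, a < c < b /\ f' c = 0.
Proof.
move=> hd hab ha hb; have [c [e hc]] := MVT_cor2 f f' a b hab (fun c _ => hd c).
exists c; split => //; rewrite ha hb in e.
by apply: (Rmult_eq_reg_r (b - a)); lra.
Qed.

(* Between two zeros lies a zero of the derivative, so zeros of [f']
   cluster wherever zeros of [f] do. *)
Lemma cluster_point_deriv f f' t0 : (forall x, derivable_pt_lim f x (f' x)) ->
  cluster_point (fun x => f x = 0) t0 -> cluster_point (fun x => f' x = 0) t0.
Proof.
move=> hd hcl eps he.
have z0 := zero_at_cluster_point (hd t0) hcl.
have [x [hx0 [hxt hxe]]] := hcl eps he.
have hx := Rabs_def2 _ _ hxe.
case: (Rlt_le_dec x t0) => hlt.
- have [c [hc hc0]] := rolle_between hd hlt hx0 z0.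
  by exists c; split => //; split; [lra|apply: Rabs_def1; lra].
- have [c [hc hc0]] := rolle_between hd (ltac:(lra) : t0 < x) z0 hx0.
  by exists c; split => //; split; [lra|apply: Rabs_def1; lra].
Qed.

Lemma derivs_vanish_at_cluster_point (h : nat -> R -> R) t0 :
  (forall k x, derivable_pt_lim (h k) x (h k.+1 x)) ->
  cluster_point (fun x => h 0%N x = 0) t0 -> forall k, h k t0 = 0.
Proof.
move=> hd hcl k; apply: zero_at_cluster_point (hd k t0) _.
by elim: k => [|k IH] //; exact: cluster_point_deriv (hd k) IH.
Qed.

(** * Sets of positive measure *)

(* Finite sets are Lebesgue null: cover the [n]-th point by an interval of
   length [eps 2^-n / 2]. *)
Lemma finite_lebesgue_null (E : R -> Prop) (s : list R) :
  (forall x, E x -> List.In x s) -> lebesgue_null E.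
Proof.
move=> Hs eps he.
pose r n := eps / 4 * (/ 2) ^ n.
have hr n : 0 < r n by apply: Rmult_lt_0_compat; [lra|apply: pow_lt; lra].
exists (fun n => List.nth n s 0 - r n), (fun n => List.nth n s 0 + r n).
split; first by move=> n; have := hr n; lra.
split.
  by move=> x /Hs /(List.In_nth _ _ 0) [n [_ <-]]; exists n; have := hr n; lra.
move=> N.
have -> : sum_f_R0 (fun n => List.nth n s 0 + r n - (List.nth n s 0 - r n)) N
          = eps / 2 * sum_f_R0 (fun n => (/ 2) ^ n) N.
  by rewrite scal_sum; apply: PartSum.sum_eq => n _; rewrite /r; field.
have g := GP_finite (/ 2) N.
have e2 : / 2 - 1 = - (1 / 2) by field.
rewrite e2 Nat.add_1_r in g.
have -> : sum_f_R0 (fun n => (/ 2) ^ n) N = 2 - 2 * (/ 2) ^ (S N) by lra.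
by have := pow_lt (/ 2) (S N) ltac:(lra); nra.
Qed.

Lemma positive_measure_not_finite (E : R -> Prop) :
  positive_measure E -> forall s : list R, exists x, E x /\ ~ List.In x s.
Proof.
move=> hE s; apply: NNPP => hn; apply: hE; apply: (@finite_lebesgue_null _ s) => x hx.
by apply: NNPP => hnx; apply: hn; exists x.
Qed.

(* A bounded set of positive measure has a cluster point
   (Bolzano-Weierstrass applied to a sequence of distinct points of [E]). *)
Lemma positive_measure_cluster_point (E : R -> Prop) a b :
  (forall x, E x -> a <= x <= b) -> positive_measure E -> exists t0, cluster_point E t0.
Proof.
move=> hab hE.
pose f (s : list R) : R :=
  proj1_sig (constructive_indefinite_description _ (positive_measure_not_finite hE s)).
have hf s : E (f s) /\ ~ List.In (f s) s.
  by rewrite /f; case: constructive_indefinite_description.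
pose fix previous n := match n with O => nil | S n => f (previous n) :: previous n end.
pose u n := f (previous n).
have in_previous m n : (m < n)%N -> List.In (u m) (previous n).
  elim: n => [|n IH] //= hmn; rewrite ltnS leq_eqVlt in hmn.
  by case/orP: hmn => [/eqP ->|hmn]; [left|right; exact: IH].
have u_inj m n : (m < n)%N -> u m <> u n.
  by move=> hmn e; apply: (proj2 (hf (previous n))); rewrite -/(u n) -e; apply: in_previous.
have [l hl] := Bolzano_Weierstrass u (fun c => a <= c <= b) (compact_P3 a b)
  (fun n => hab _ (proj1 (hf (previous n)))).
exists l => eps he.
have nb : neighbourhood (fun y => Rabs (y - l) < eps) l.
  by exists (mkposreal eps he) => y; rewrite /disc /=.
have [p1 [_ hp1]] := hl _ 0%N nb.
case: (Req_dec (u p1) l) => e1.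
- have [p2 [hp2 hp2']] := hl _ p1.+1 nb.
  exists (u p2); split; [exact: (proj1 (hf (previous p2)))|split => //].
  by rewrite -e1 => e2; apply: (u_inj p1 p2) => //; apply/leP.
- by exists (u p1); split; [exact: (proj1 (hf (previous p1)))|split].
Qed.

Definition Ccv (u : nat -> Cpx) (l : Cpx) :=
  Un_cv (fun m => cre (u m)) (cre l) /\ Un_cv (fun m => cim (u m)) (cim l).

Lemma Un_cv_ext u v l : Un_cv u l -> (forall m, u m = v m) -> Un_cv v l.
Proof. by move=> H E e he; have [N HN] := H e he; exists N => n hn; rewrite -E; exact: HN. Qed.

Lemma Ccv_ext u v l : Ccv u l -> (forall m, u m = v m) -> Ccv v l.
Proof. by move=> [h1 h2] E; split; [apply: Un_cv_ext h1 _|apply: Un_cv_ext h2 _] => m; rewrite E. Qed.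

Lemma Ccv_const c : Ccv (fun _ => c) c.
Proof.
have cst (r : R) : Un_cv (fun _ => r) r.
  by move=> e he; exists 0%N => n _; rewrite /R_dist Rminus_diag Rabs_R0.
by split; exact: cst.
Qed.

Lemma Ccv_add u v a b : Ccv u a -> Ccv v b -> Ccv (fun m => u m + v m)%R (a + b)%R.
Proof.
move=> [h1 h2] [h3 h4]; split.
- exact: Un_cv_ext (CV_plus _ _ _ _ h1 h3) _.
- exact: Un_cv_ext (CV_plus _ _ _ _ h2 h4) _.
Qed.

Lemma Ccv_mul u v a b : Ccv u a -> Ccv v b -> Ccv (fun m => u m * v m)%R (a * b)%R.
Proof.
move=> [h1 h2] [h3 h4]; split.
- exact: Un_cv_ext (CV_minus _ _ _ _ (CV_mult _ _ _ _ h1 h3) (CV_mult _ _ _ _ h2 h4)) _.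
- exact: Un_cv_ext (CV_plus _ _ _ _ (CV_mult _ _ _ _ h1 h4) (CV_mult _ _ _ _ h2 h3)) _.
Qed.

Lemma Ccv_unique u a b : Ccv u a -> Ccv u b -> a = b.
Proof. by move=> [h1 h2] [h3 h4]; apply: Cext; [exact: UL_sequence h1 h3|exact: UL_sequence h2 h4]. Qed.

Lemma Ccv_sum (I : Type) (r : seq I) (F : I -> nat -> Cpx) (L : I -> Cpx) :
  (forall i, Ccv (F i) (L i)) -> Ccv (fun m => \sum_(i <- r) F i m)%R (\sum_(i <- r) L i)%R.
Proof.
move=> H; elim: r => [|i r IH].
  by apply: Ccv_ext (Ccv_const _) _ => m; rewrite !big_nil.
by rewrite big_cons; apply: Ccv_ext (Ccv_add (H i) IH) _ => m; rewrite big_cons.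
Qed.

Lemma Ccv_prod (I : Type) (r : seq I) (F : I -> nat -> Cpx) (L : I -> Cpx) :
  (forall i, Ccv (F i) (L i)) -> Ccv (fun m => \prod_(i <- r) F i m)%R (\prod_(i <- r) L i)%R.
Proof.
move=> H; elim: r => [|i r IH].
  by apply: Ccv_ext (Ccv_const _) _ => m; rewrite !big_nil.
by rewrite big_cons; apply: Ccv_ext (Ccv_mul (H i) IH) _ => m; rewrite big_cons.
Qed.

(* The determinant is continuous (Leibniz formula). *)
Lemma Ccv_det n (A : nat -> 'M[Cpx]_n) (L : 'M[Cpx]_n) :
  (forall i j, Ccv (fun m => A m i j) (L i j)) -> Ccv (fun m => \det (A m))%R (\det L)%R.
Proof.
move=> H; rewrite /determinant.
apply: Ccv_sum => s; apply: Ccv_mul; first exact: Ccv_const.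
by apply: Ccv_prod => i; apply: H.
Qed.

Lemma Ccv_Cexp0 (z : nat -> Cpx) a : 0 < a -> (forall m, cre (z m) <= - a * INR m) ->
  Ccv (fun m => Cexp (z m)) 0%R.
Proof.
move=> ha hz.
have hx : Rabs (exp (- a)) < 1.
  rewrite Rabs_pos_eq; last exact: Rlt_le (exp_pos _).
  by rewrite -exp_0; apply: exp_increasing; lra.
have geometric m : Rabs (exp (cre (z m))) <= exp (- a) ^ m.
  rewrite Rabs_pos_eq; last exact: Rlt_le (exp_pos _).
  have -> : exp (- a) ^ m = exp (INR m * - a).
    by elim: m => [|m IH]; rewrite ?Rmult_0_l ?exp_0 // [_ ^ m.+1]/= IH -exp_plus S_INR; congr exp; ring.
  by apply: exp_le_mono; have := hz m; lra.
have decay (f : R -> R) : (forall x, Rabs (f x) <= 1) ->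
    Un_cv (fun m => exp (cre (z m)) * f (cim (z m))) 0.
  move=> hf e he; have [N HN] := pow_lt_1_zero _ hx e he.
  exists N => n hn; rewrite /R_dist Rminus_0_r Rabs_mult.
  have := HN n hn; have := geometric n; have := hf (cim (z n)).
  have := Rabs_pos (f (cim (z n))); have := Rabs_pos (exp (cre (z n))).
  rewrite (Rabs_pos_eq (exp (-a) ^ n)); first by nra.
  by apply: pow_le; exact: Rlt_le (exp_pos _).
split.
- by apply: decay => x; apply: Rabs_le; have := COS_bound x; lra.
- by apply: decay => x; apply: Rabs_le; have := SIN_bound x; lra.
Qed.

Lemma det_lowblock (d : nat) (f : nat -> nat -> Cpx) (c : Cpx) n : (d <= n)%N ->
  (\det (\matrix_(i < n, j < n) (if (i < d)%N then f i j else c *+ (i == j :> nat)))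
  = c ^+ (n - d) * \det (\matrix_(i < d, j < d) f i j))%R.
Proof.
elim: n => [|n IH] hd.
  have -> : d = 0%N by apply/eqP; rewrite -leqn0.
  by rewrite !det_mx00 expr0 mul1r.
case: (ltngtP d n.+1) => hdn; last first.
- subst d; rewrite subnn expr0 mul1r; congr (\det _)%R.
  by apply/matrixP => i j; rewrite !mxE ltn_ord.
- by move: hd; rewrite leqNgt hdn.
have hdn' : (d <= n)%N by rewrite -ltnS.
rewrite (expand_det_row _ ord_max) (bigD1 ord_max) //= big1; last first.
  move=> j hj; rewrite !mxE /= ltnNge hdn' /=.
  have -> : (n == j :> nat) = false.
    by apply/negbTE; apply: contra hj => /eqP e; apply/eqP; apply: val_inj; rewrite /= -e.
  by rewrite mulr0n mul0r.
rewrite addr0 !mxE /= ltnNge hdn' /= eqxx mulr1n /cofactor /=.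
have -> : ((-1) ^+ (n + n) = 1 :> Cpx)%R by rewrite -signr_odd addnn odd_double expr0.
rewrite mul1r subSn // exprS -mulrA -(IH hdn'); congr (_ * \det _)%R.
by apply/matrixP => i j; rewrite !mxE !lift_max.
Qed.

(** * Roots of unity and invertibility of G *)

Lemma cexpi_add a b : (cexpi a * cexpi b)%R = cexpi (a + b).
Proof. by rewrite -!Cexp_imag -Cexp_add; congr Cexp; apply: Cext => /=; ring. Qed.

Lemma cexpi0 : cexpi 0 = 1%R.
Proof. by rewrite -Cexp_imag -Cexp0. Qed.

Lemma cexpi_neq0 a : cexpi a <> 0%R.
Proof. by rewrite -Cexp_imag; exact: Cexp_neq0. Qed.

Lemma cexpi_nat x k : cexpi (INR k * x) = (cexpi x ^+ k)%R.
Proof.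
elim: k => [|k IH]; first by rewrite /= Rmult_0_l cexpi0 expr0.
by rewrite exprS -IH cexpi_add S_INR; congr cexpi; ring.
Qed.

Lemma cexpi_2PIn k : cexpi (2 * PI * INR k) = 1%R.
Proof.
apply: Cext => /=.
- by have := cos_period 0 k; rewrite cos_0 Rplus_0_l => <-; congr cos; ring.
- by have := sin_period 0 k; rewrite sin_0 Rplus_0_l => <-; congr sin; ring.
Qed.

Lemma cexpi_neq1 x : 0 < x < 2 * PI -> cexpi x <> 1%R.
Proof.
move=> hx e.
have hs : sin x = 0 by have := f_equal cim e.
have hc : cos x = 1 by have := f_equal cre e.
have [k hk] := sin_eq_0_0 x hs; have hpi := PI_RGT_0.
have h1 : 0 < IZR k by apply: (Rmult_lt_reg_r PI) => //; lra.
have h2 : IZR k < 2 by apply: (Rmult_lt_reg_r PI) => //; lra.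
have ek : k = Zpos xH by apply lt_IZR in h1; apply lt_IZR in h2; lia.
by rewrite hk ek Rmult_1_l cos_PI in hc; lra.
Qed.

Lemma natr_neq0 n : (0 < n)%N -> (n%:R : Cpx)%R <> 0%R.
Proof.
move=> hn e; have hcre : cre (n%:R : Cpx)%R = INR n.
  by elim: (n) => [|m IH] //; rewrite mulrS creD IH S_INR /=; ring.
have : 0 < INR n by apply: INR_gt0.
by rewrite -hcre e /=; lra.
Qed.

Lemma sum_root_of_unity (Q z : nat) : (0 < z)%N -> (z < Q)%N ->
  (\sum_(k < Q) cexpi (2 * PI * INR z / INR Q) ^+ k)%R = 0%R.
Proof.
move=> hz hzQ.
have hQ : 0 < INR Q by apply: INR_gt0; apply: leq_ltn_trans hzQ.
have hz' : 0 < INR z by apply: INR_gt0.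
have hzQ' : INR z < INR Q by apply: lt_INR; apply/ltP.
set zeta := cexpi _.
have hpow : (zeta ^+ Q)%R = 1%R.
  by rewrite /zeta -cexpi_nat -(cexpi_2PIn z); congr cexpi; field; lra.
have hne : (zeta - 1)%R != 0%R.
  rewrite subr_eq0; apply/eqP; apply: cexpi_neq1; split.
  + by apply: Rdiv_lt_0_compat => //; have := PI_RGT_0; nra.
  + apply: (Rmult_lt_reg_r (INR Q)) => //; rewrite /Rdiv Rmult_assoc Rinv_l; last lra.
    by have := PI_RGT_0; nra.
have := subrX1 zeta Q; rewrite hpow subrr => /esym/eqP.
by rewrite mulf_eq0 (negbTE hne) /= => /eqP.
Qed.

Lemma fourier_orthogonality (Q s t : nat) : (s < Q)%N -> (t < Q)%N ->
  (\sum_(k < Q) cexpi (2 * PI * INR k * (INR t - INR s) / INR Q))%R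
  = (if s == t then Q%:R else 0)%R.
Proof.
move=> hs ht.
have hQ : 0 < INR Q by apply: INR_gt0; apply: leq_ltn_trans ht.
case: eqP => [<-|hst] /=.
  under eq_bigr => k _ do rewrite Rminus_diag Rmult_0_r /Rdiv Rmult_0_l cexpi0.
  by rewrite sumr_const card_ord.
case: (ltngtP s t) => hlt; last by [].
- rewrite -[in RHS](@sum_root_of_unity Q (t - s)%N) ?subn_gt0 //;
    last by apply: leq_ltn_trans (leq_subr _ _) ht.
  apply: eq_bigr => k _; rewrite -cexpi_nat; congr cexpi.
  by rewrite (minus_INR t s); [field; lra|apply/leP; apply: ltnW].
- rewrite -[in RHS](@sum_root_of_unity Q (t + Q - s)%N); first last.
  + by rewrite ltn_subLR ?ltn_add2r // (leq_trans (ltnW hs)) // leq_addl.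
  + by rewrite subn_gt0 (leq_trans hs) // leq_addl.
  apply: eq_bigr => k _; rewrite -cexpi_nat.
  rewrite -[cexpi (2 * PI * INR k * _ / _)]mulr1 -(cexpi_2PIn k) cexpi_add; congr cexpi.
  rewrite (minus_INR (t + Q) s); last by apply/leP; rewrite (leq_trans (ltnW hs)) // leq_addl.
  by rewrite plus_INR; field; lra.
Qed.

Section InvertibleG.
Variables (Q : nat) (p : Z) (q : nat) (b : R).
Hypothesis hQ : (0 < Q)%N.

Definition fourier_mx : 'M[Cpx]_Q :=
  (\matrix_(s < Q, k < Q) cexpi (- (2 * PI * INR s * INR k / INR Q)))%R.
Definition fourier_inv_mx : 'M[Cpx]_Q :=
  (\matrix_(j < Q, s < Q) ((Q%:R)^-1 * cexpi (2 * PI * INR s * INR j / INR Q)))%R.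
Definition a_row : 'rV[Cpx]_Q := (\row_(s < Q) a_idx p q b s)%R.

Lemma Gmx_fourier : Gmx Q p q b = (fourier_inv_mx *m diag_mx a_row *m fourier_mx)%R.
Proof.
apply/matrixP => j k; rewrite mul_mx_diag !mxE /Gent mulr_sumr; apply: eq_bigr => s _.
rewrite !mxE /= -!mulrA; congr (_ * _)%R.
rewrite [(a_idx _ _ _ _ * _)%R]mulrC mulrA cexpi_add; congr (cexpi _ * _)%R.
by have := INR_gt0 hQ => h; field; lra.
Qed.

Lemma fourier_mxK : (fourier_mx *m fourier_inv_mx)%R = 1%:M%R.
Proof.
apply/matrixP => s t; rewrite !mxE.
under eq_bigr => k _ do rewrite !mxE mulrCA cexpi_add.
rewrite -mulr_sumr.
have -> : (\sum_(k < Q) cexpi (- (2 * PI * INR s * INR k / INR Q)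
                                + 2 * PI * INR t * INR k / INR Q))%R
        = (\sum_(k < Q) cexpi (2 * PI * INR k * (INR t - INR s) / INR Q))%R.
  by apply: eq_bigr => k _; congr cexpi; have := INR_gt0 hQ => h; field; lra.
rewrite fourier_orthogonality //.
have -> : (nat_of_ord s == nat_of_ord t) = (s == t) by [].
case: eqP => [_|_]; last by rewrite mulr0.
by rewrite mulVf //; apply/eqP; exact: natr_neq0.
Qed.

(* Since every [a_r] is a unimodular exponential, [G] is invertible. *)
Lemma det_Gmx_neq0 : (\det (Gmx Q p q b))%R <> 0%R.
Proof.
have hF : (\det fourier_mx * \det fourier_inv_mx = 1)%R.
  by rewrite -det_mulmx fourier_mxK det1.
have hFi : (\det fourier_inv_mx)%R != 0%R.
  by apply/eqP => e; move: hF; rewrite e mulr0 => /esym/eqP; rewrite oner_eq0.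
have hFm : (\det fourier_mx)%R != 0%R.
  by apply/eqP => e; move: hF; rewrite e mul0r => /esym/eqP; rewrite oner_eq0.
have ha : (\prod_i a_row 0 i)%R != 0%R.
  by apply/prodf_neq0 => i _; rewrite mxE; apply/eqP; exact: cexpi_neq0.
rewrite Gmx_fourier !det_mulmx det_diag; apply/eqP.
by rewrite !mulf_neq0.
Qed.
End InvertibleG.

(* Zeros of the restriction to the real axis cluster at some [t0], so all
   derivatives vanish at [t0] and the identity theorem applies. *)
Lemma exp_poly_vanishing (f : Cpx -> Cpx) (E : R -> Prop) a c :
  is_exp_poly f -> (forall x, E x -> a <= x <= c) -> positive_measure E ->
  (forall x, E x -> f (RC x) = 0%R) -> forall w, f w = 0%R.
Proof.
move=> [l hl] hac hE hz.
have [t0 ht0] := positive_measure_cluster_point hac hE.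
have real_line x : (0 + RC x * 1)%R = RC x by rewrite add0r mulr1.
have derivs_t0 k : ep_eval (ep_derivn k l) (0 + RC t0 * 1)%R = 0%R.
  apply: components_eq0 => b.
  pose h k s := component b (ep_eval (ep_derivn k l) (0 + RC s * 1)%R).
  have hd k' x : derivable_pt_lim (h k') x (h k'.+1 x).
    apply: component_deriv.
    by apply: Cderiv_ext (ep_eval_line_deriv (ep_derivn k' l) 0%R 1%R x) _ _; rewrite ?mul1r.
  apply: (derivs_vanish_at_cluster_point hd) => eps he.
  have [x [hx [hxt hxe]]] := ht0 eps he.
  by exists x; split => //; rewrite /h /= real_line -hl hz // component0.
by move=> w; rewrite hl; exact: ep_identity derivs_t0 w.
Qed.

(** * The characteristic function [det (S(w) - lam)] for complex [w] *)

Section CharacteristicFunction.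
Variables (Q : nat) (p : Z) (q : nat) (b mu : R) (lam : Cpx).

Definition angle (j : nat) : R := 2 * PI * INR j / INR Q.

(* [-i mu cos (w + angle j)] written as [g e^{iw} + d e^{-iw}]. *)
Definition row_phase (j : nat) (w : Cpx) : Cpx :=
  (- (Ci * RC (mu / 2)) * Cexp (MkC 0 (angle j)) * Cexp (Ci * w)
   + - (Ci * RC (mu / 2)) * Cexp (MkC 0 (- angle j)) * Cexp (- (Ci * w)))%R.

Definition char_mx (w : Cpx) : 'M[Cpx]_Q :=
  (\matrix_(j < Q, k < Q) (Cexp (row_phase j w) * Gent Q p q b j k - lam *+ (j == k)))%R.
Definition char_det (w : Cpx) : Cpx := (\det (char_mx w))%R.

Lemma row_phase_real j t :
  Cexp (row_phase j (RC t)) = cexpi (- (mu * cos (t + 2 * PI * INR j / INR Q))).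
Proof.
rewrite -Cexp_imag; congr Cexp; rewrite /row_phase.
have -> : (Ci * RC t)%R = MkC 0 t by apply: Cext => /=; ring.
have -> : (- MkC 0 t)%R = MkC 0 (- t) by apply: Cext => /=; ring.
rewrite !Cexp_imag /cexpi /angle cos_neg sin_neg.
by apply: Cext; rewrite ?(creD, cimD, creN, cimN, creM, cimM, creRC, cimRC);
  cbn [cre cim Ci]; rewrite ?cos_plus ?cos_neg ?sin_neg; field.
Qed.

Lemma char_mx_real t : char_mx (RC t) = (Smx Q p q b t mu - lam%:M)%R.
Proof. by apply/matrixP => j k; rewrite !mxE row_phase_real. Qed.

(* Expanding the determinant, [char_det] is an exponential polynomial. *)
Lemma char_det_exp_poly : is_exp_poly char_det.
Proof.
apply: (@is_exp_poly_ext
          (fun w => \sum_(s : 'S_Q) (-1) ^+ s * \prod_i char_mx w i (s i))%R) => //.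
apply: is_exp_poly_sum => s; apply: is_exp_poly_mul; first exact: is_exp_poly_const.
apply: is_exp_poly_prod => i.
apply: (@is_exp_poly_ext
  (fun w => Cexp (row_phase i w) * Gent Q p q b i (s i) + - (lam *+ (i == s i)))%R);
  last by move=> w; rewrite mxE.
apply: is_exp_poly_add; last exact: is_exp_poly_const.
apply: is_exp_poly_mul; last exact: is_exp_poly_const.
exact: is_exp_poly_exp.
Qed.

(** Behaviour along the vertical line [w_m = pi/(2Q) - i m]. *)

Hypothesis Q_gt0 : (0 < Q)%N.
Hypothesis mu_gt0 : 0 < mu.

Let d := (Q.+1)./2.
Definition theta0 : R := PI / (2 * INR Q).
Definition wpath (m : nat) : Cpx := MkC theta0 (- INR m).
Definition row_sign (j : nat) : R := sin (theta0 + angle j).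

Lemma cre_row_phase j m :
  cre (row_phase j (wpath m)) = mu / 2 * (exp (INR m) - exp (- INR m)) * row_sign j.
Proof.
rewrite /row_phase /row_sign.
have -> : (Ci * wpath m)%R = MkC (INR m) theta0 by apply: Cext => /=; ring.
have -> : (- MkC (INR m) theta0)%R = MkC (- INR m) (- theta0) by apply: Cext => /=; ring.
rewrite !Cexp_imag sin_plus.
rewrite ?(creD, cimD, creN, cimN, creM, cimM, creRC, cimRC) /= cos_neg sin_neg.
by rewrite ?cos_neg ?sin_neg; field.
Qed.

Lemma exp_sub_exp_ge m : INR m <= exp (INR m) - exp (- INR m).
Proof.
have h1 : exp (- INR m) <= 1.
  by rewrite -exp_0; apply: exp_le_mono; have := pos_INR m; lra.
case: (Req_dec (INR m) 0) => [->|hm]; first by rewrite Ropp_0 exp_0; lra.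
by have := exp_ineq1 _ hm; lra.
Qed.

Lemma theta0_angle j : theta0 + angle j = PI * (4 * INR j + 1) / (2 * INR Q).
Proof. by rewrite /theta0 /angle; have := INR_gt0 Q_gt0 => h; field; lra. Qed.

Lemma row_sign_pos j : (j < d)%N -> 0 < row_sign j.
Proof.
rewrite /d gtn_half_double ltnS -addnn => hj.
have hj' : 2 * INR j + 1 <= INR Q.
  by have := le_INR _ _ (elimT leP hj); rewrite S_INR plus_INR; lra.
have hpi := PI_RGT_0; have hq := INR_gt0 Q_gt0; have := pos_INR j => h0.
rewrite /row_sign theta0_angle; apply: sin_gt_0.
- by apply: Rdiv_lt_0_compat; nra.
- apply: (Rmult_lt_reg_r (2 * INR Q)); first lra.
  by rewrite /Rdiv Rmult_assoc Rinv_l; [nra|lra].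
Qed.

Lemma row_sign_neg j : (d <= j)%N -> (j < Q)%N -> row_sign j < 0.
Proof.
rewrite /d leq_half_double ltnS -addnn => hj hjQ.
have hj' : INR Q <= 2 * INR j by have := le_INR _ _ (elimT leP hj); rewrite plus_INR; lra.
have hjQ' : INR j + 1 <= INR Q by have := le_INR _ _ (elimT leP hjQ); rewrite S_INR; lra.
have hpi := PI_RGT_0; have hq := INR_gt0 Q_gt0; have := pos_INR j => h0.
rewrite /row_sign theta0_angle; apply: sin_lt_0.
- apply: (Rmult_lt_reg_r (2 * INR Q)); first lra.
  by rewrite /Rdiv Rmult_assoc Rinv_l; [nra|lra].
- apply: (Rmult_lt_reg_r (2 * INR Q)); first lra.
  by rewrite /Rdiv Rmult_assoc Rinv_l; [nra|lra].
Qed.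

(* Dividing the first [d] rows of [char_mx (wpath m)] by their exponential
   factor gives a matrix whose entries all converge. *)
Definition scaled_mx (m : nat) : 'M[Cpx]_Q :=
  (\matrix_(i < Q, j < Q)
     (if (i < d)%N
      then Gent Q p q b i j + (- (lam *+ (i == j))) * Cexp (- row_phase i (wpath m))
      else Cexp (row_phase i (wpath m)) * Gent Q p q b i j + (- (lam *+ (i == j)))))%R.
Definition row_scale (m : nat) : 'rV[Cpx]_Q :=
  (\row_(i < Q) (if (i < d)%N then Cexp (row_phase i (wpath m)) else 1))%R.

Lemma char_mx_factor m : char_mx (wpath m) = (diag_mx (row_scale m) *m scaled_mx m)%R.
Proof.
apply/matrixP => i j; rewrite mul_diag_mx !mxE.
case: ifP => _; last by rewrite mul1r.
set E := Cexp (row_phase i (wpath m)); set E' := Cexp (- row_phase i (wpath m))%R.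
have hE : (E * E')%R = 1%R by rewrite /E /E' mulrC CexpNK.
by rewrite mulrDr; congr (_ + _)%R; rewrite mulrCA hE mulr1.
Qed.

Lemma det_scaled_mx_eq0 m : (forall w, char_det w = 0%R) -> (\det (scaled_mx m))%R = 0%R.
Proof.
move=> hz; have := hz (wpath m); rewrite /char_det char_mx_factor det_mulmx det_diag.
move/eqP; rewrite mulf_eq0 => /orP [/eqP e|/eqP //]; exfalso; move: e; apply/eqP.
apply/prodf_neq0 => i _; rewrite mxE.
by case: ifP => _; [apply/eqP; exact: Cexp_neq0|exact: oner_neq0].
Qed.

Definition limit_mx : 'M[Cpx]_Q :=
  (\matrix_(i < Q, j < Q)
     (if (i < d)%N then Gent Q p q b i j else (- lam) *+ (i == j :> nat)))%R.

Lemma scaled_mx_cv i j : Ccv (fun m => scaled_mx m i j) (limit_mx i j).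
Proof.
rewrite /limit_mx mxE.
case: (ltnP i d) => hi.
- have hs := row_sign_pos hi.
  have ha : 0 < mu * row_sign i / 2 by apply: Rdiv_lt_0_compat; [nra|lra].
  have hc := @Ccv_Cexp0 (fun m => - row_phase i (wpath m))%R (mu * row_sign i / 2) ha
    (fun m => ltac:(rewrite creN cre_row_phase; have := exp_sub_exp_ge m; nra)).
  have H := Ccv_add (Ccv_const (Gent Q p q b i j))
                    (Ccv_mul (Ccv_const (- (lam *+ (i == j)))%R) hc).
  rewrite mulr0 addr0 in H.
  by apply: Ccv_ext H _ => m; rewrite /scaled_mx mxE hi.
- have hs := row_sign_neg hi (ltn_ord i).
  have ha : 0 < mu * (- row_sign i) / 2 by apply: Rdiv_lt_0_compat; [nra|lra].
  have hc := @Ccv_Cexp0 (fun m => row_phase i (wpath m)) (mu * (- row_sign i) / 2) ha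
    (fun m => ltac:(rewrite cre_row_phase; have := exp_sub_exp_ge m; nra)).
  have H := Ccv_add (Ccv_mul hc (Ccv_const (Gent Q p q b i j)))
                    (Ccv_const (- (lam *+ (i == j)))%R).
  rewrite mul0r add0r in H.
  have -> : ((- lam) *+ (i == j :> nat) = - (lam *+ (i == j)))%R by rewrite mulNrn.
  by apply: Ccv_ext H _ => m; rewrite /scaled_mx mxE ltnNge hi.
Qed.

(* If [char_det] vanishes identically and [lam != 0], then [det G^(d) = 0]:
   the limit of [det (scaled_mx m) = 0] is [(-lam)^(Q-d) det G^(d)]. *)
Lemma det_Gd_eq0 : (forall w, char_det w = 0%R) -> lam <> 0%R ->
  (\det (Gd d Q p q b))%R = 0%R.
Proof.
move=> hz hlam.
have hdQ : (d <= Q)%N by rewrite /d leq_half_double ltnS -addnn leq_addr.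
have hL := Ccv_unique (Ccv_det scaled_mx_cv)
   (Ccv_ext (Ccv_const 0%R) (fun m => esym (det_scaled_mx_eq0 m hz))).
rewrite (det_lowblock (Gent Q p q b) (- lam)%R hdQ) in hL.
move/eqP: hL; rewrite mulf_eq0 => /orP [|/eqP //].
by rewrite expf_eq0 oppr_eq0 => /andP [_ /eqP].
Qed.

(* For [lam = 0] the characteristic function does not vanish at [0], because
   [G] is invertible. *)
Lemma char_det0_neq0 : lam = 0%R -> char_det 0%R <> 0%R.
Proof.
move=> lam0.
have -> : char_det 0%R
          = (\det (diag_mx (\row_(i < Q) Cexp (row_phase i 0%R)) *m Gmx Q p q b))%R.
  rewrite /char_det; congr (\det _)%R; apply/matrixP => i j.
  by rewrite mul_diag_mx !mxE lam0 mul0rn subr0.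
rewrite det_mulmx det_diag => /eqP; rewrite mulf_eq0 => /orP [|/eqP];
  last exact: det_Gmx_neq0.
by apply/negP; apply/prodf_neq0 => i _; rewrite mxE; apply/eqP; exact: Cexp_neq0.
Qed.

End CharacteristicFunction.

Lemma eigenvalue_det_eq0 n (g : 'M[Cpx]_n) a : eigenvalue g a -> (\det (g - a%:M))%R = 0%R.
Proof.
move/eigenvalueP => [v hv hv0]; apply/eqP/det0P; exists v => //.
by rewrite mulmxBr hv mul_mx_scalar subrr.
Qed.

Theorem lemma1 (P nu : Z) (Q : nat) (p : Z) (q : nat) (mu : R) (E : R -> Prop) :
  (1 <= Q)%N ->
  P <> Z0 ->
  (0 < q)%N ->
  Z.mul P (Z.of_nat q) = Z.mul p (Z.of_nat Q) ->
  Z.gcd p (Z.of_nat q) = Zpos xH ->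
  0 < mu ->
  (forall theta, E theta -> 0 < theta < 2 * PI / INR Q) ->
  positive_measure E ->
  (exists lam : Cpx, forall theta, E theta ->
      eigenvalue (Smx Q p q (beta P nu Q) theta mu) lam) ->
  (\det (Gd (Q.+1)./2 Q p q (beta P nu Q)) = 0)%R.
Proof.
move=> hQ _ _ _ _ hmu hE hpos [lam hlam].
set b := beta P nu Q.
(* [det (S(theta) - lam)] vanishes on [E], hence the characteristic function vanishes. *)
have char_det_E x : E x -> char_det Q p q b mu lam (RC x) = 0%R.
  by move=> hx; rewrite /char_det char_mx_real; apply: eigenvalue_det_eq0; apply: hlam.
have E_bounded x : E x -> 0 <= x <= 2 * PI / INR Q.
  by move=> /hE [h1 h2]; split; apply: Rlt_le.
have char_det0 :=
  exp_poly_vanishing (char_det_exp_poly Q p q b mu lam) E_bounded hpos char_det_E.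
(* [lam = 0] is excluded by the invertibility of [G]. *)
have lam_neq0 : lam <> 0%R by move=> lam0; exact: (char_det0_neq0 hQ lam0 (char_det0 0%R)).
exact: det_Gd_eq0 hQ hmu char_det0 lam_neq0.
Qed.
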